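(* Every connected triangulated $2$-manifold (possibly with boundary) has a facet path.
   Context: A triangulated $2$-manifold is a finite collection of triangles (called facets), each with three distinct vertices, glued together along edges so that the resulting space is a $2$-manifold, possibly with boundary; it need not be a simplicial complex (two facets may share more than one edge). The (vertex-facet) incidence graph is the bipartite graph whose nodes are the facets and vertices, with an arc $(v,f)$ whenever $v$ is a vertex of $f$. A facet path is a trail $(v_0,f_1,v_1,f_2,\dots,f_k,v_k)$ in the incidence graph (consecutive nodes adjacent, no arc repeated) that contains every facet node exactly once; vertex nodes may repeat. *)

From mathcomp Require Import all_boot.
Set Implicit Arguments. Unset Strict Implicit. Unset Printing Implicit Defensive.

(* A triangulated 2-manifold (possibly with boundary), not necessarily a
   simplicial complex.  Facets have type F, vertices type V.
   - [vx f i] is the vertex at corner i of facet f (i : 'I_3);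
     the three vertices of a facet are distinct ([vx_inj]).
   - side i of facet f is the edge opposite corner i; [glue f i] is
     [Some (g, j)] when side i of f is glued to side j of g, [None] when it
     is a boundary edge.  Gluing is a partial involution between sides of
     distinct facets, and glued sides have the same pair of endpoints (this
     determines the identification of their endpoints).
   - vertices are exactly the points obtained from corners under the gluing,
     and the space is a 2-manifold at each vertex: for every vertex v the
     corners at v form one connected chain/cycle (its link) under
     "the two facets are glued along a side through these corners"
     ([link_connected]); every vertex is a corner of some facet. *)

Definition side_vx (V : finType) (vx : 'I_3 -> V) (i : 'I_3) : {set V} :=
  [set vx k | k in [pred k : 'I_3 | k != i]].

Definition corner_adj (F V : finType) (vx : F -> 'I_3 -> V)
  (glue : F -> 'I_3 -> option (F * 'I_3)) : rel (F * 'I_3) :=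
  fun c d => [exists i : 'I_3, (i != c.2) &&
     [exists j : 'I_3, [&& glue c.1 i == Some (d.1, j), d.2 != j &
                           vx d.1 d.2 == vx c.1 c.2]]].

Record tri2manifold (F V : finType) := Tri2Manifold {
  vx : F -> 'I_3 -> V;
  glue : F -> 'I_3 -> option (F * 'I_3);
  vx_inj : forall f, injective (vx f);
  glue_invol : forall f i g j, glue f i = Some (g, j) -> glue g j = Some (f, i);
  glue_other : forall f i g j, glue f i = Some (g, j) -> g != f;
  glue_vx : forall f i g j, glue f i = Some (g, j) ->
              side_vx (vx f) i = side_vx (vx g) j;
  vx_surj : forall v : V, exists f i, vx f i = v;
  link_connected : forall c d : F * 'I_3, vx c.1 c.2 = vx d.1 d.2 ->
              connect (corner_adj vx glue) c d
}.

Definition is_vertex (F V : finType) (T : tri2manifold F V) (v : V) (f : F) : bool :=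
  [exists i : 'I_3, vx T f i == v].

Definition inc_rel (F V : finType) (T : tri2manifold F V) : rel (V + F) :=
  fun x y => match x, y with
             | inl v, inr f => is_vertex T v f
             | inr f, inl v => is_vertex T v f
             | _, _ => false
             end.

(* the space is connected: nonempty, and any two nodes of the incidence
   graph are joined (equivalent to topological connectedness of the union
   of the closed triangles) *)
Definition tri_connected (F V : finType) (T : tri2manifold F V) : Prop :=
  0 < #|F| /\ forall x y : V + F, connect (inc_rel T) x y.

(* A trail (v0, f1, v1, ..., fk, vk) is encoded by v0 and
   s = [:: (f1, v1); ...; (fk, vk)]. *)
Fixpoint trail_arcs (F V : finType) (v0 : V) (s : seq (F * V)) : seq (V * F) :=
  match s with
  | [::] => [::]
  | (f, v) :: s' => (v0, f) :: (v, f) :: trail_arcs v s'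
  end.

Fixpoint trail_adj (F V : finType) (T : tri2manifold F V) (v0 : V)
  (s : seq (F * V)) : bool :=
  match s with
  | [::] => true
  | (f, v) :: s' => [&& is_vertex T v0 f, is_vertex T v f & trail_adj T v s']
  end.

(* facet path: a trail in the incidence graph (consecutive nodes adjacent,
   no arc repeated) containing every facet node exactly once *)
Definition facet_path (F V : finType) (T : tri2manifold F V) (v0 : V)
  (s : seq (F * V)) : Prop :=
  [/\ trail_adj T v0 s, uniq (trail_arcs v0 s),
      uniq (map fst s) & forall f : F, f \in map fst s].

(* Induction on the number of facets of a connected set S of facets, for the
   stronger claim: for every facet g of S and every side i of g, from either
   endpoint of side i some walk visits each facet of S exactly once, has
   distinct consecutive vertices, and ends on side i.  Removing g splits the
   rest of S into at most three connected branches B_j, B_j being attached to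
   g along side j.  If side i = {p, q} and w is the third vertex of g, walk
   from p through B_l (attached along {p, w}) back to p or w, then through g
   and B_k (attached along {w, q}) to p or q, reversing the walk through B_k
   when needed, and finally through B_i.  Since facets are distinct and the
   two vertices used at each facet differ, no arc of the incidence graph is
   repeated.  The manifold hypothesis only enters to turn connectivity of the
   incidence graph into connectivity of the facet adjacency graph. *)

From mathcomp Require Import all_boot.
Set Implicit Arguments. Unset Strict Implicit. Unset Printing Implicit Defensive.

Section FacetPath.
Variables (F V : finType) (T : tri2manifold F V).
Local Notation vx := (vx T).
Local Notation glue := (glue T).
Local Notation side g i := (side_vx (vx g) i).
Implicit Types (S A B : {set F}) (X Y Z : {set V}) (s : seq (F * V)).

Definition facet_adj : rel F :=
  fun f h => [exists j, [exists j', glue f j == Some (h, j')]].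

Lemma facet_adjP f h :
  reflect (exists j j', glue f j = Some (h, j')) (facet_adj f h).
Proof.
apply: (iffP existsP) => [[j /existsP[j' /eqP E]]|[j [j' E]]]; first by exists j, j'.
by exists j; apply/existsP; exists j'; rewrite E.
Qed.

Lemma facet_adj_sym : symmetric facet_adj.
Proof.
suff adjC f h : facet_adj f h -> facet_adj h f by move=> f h; apply/idP/idP; apply: adjC.
by case/facet_adjP=> j [j' /glue_invol E]; apply/facet_adjP; exists j', j.
Qed.

Definition adj_in (S : {set F}) : rel F :=
  fun a b => [&& a \in S, b \in S & facet_adj a b].

Lemma adj_in_sym S : symmetric (adj_in S).
Proof. by move=> a b; rewrite /adj_in facet_adj_sym andbCA. Qed.

Lemma adj_in_connect_sym S : connect_sym (adj_in S).
Proof. exact/sym_connect_sym/adj_in_sym. Qed.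

Definition connected_in (S : {set F}) : Prop :=
  {in S &, forall a b, connect (adj_in S) a b}.

Lemma connect_adj_in_closed (A B : {set F}) a b :
  closed (adj_in A) B -> a \in B ->
  connect (adj_in A) a b -> connect (adj_in B) a b.
Proof.
move=> clB aB /connectP[p pA ->]; apply/connectP; exists p => //.
have pB : all [in B] (a :: p).
  apply/allP => z /(path_connect pA) az.
  by rewrite -(closed_connect clB az).
apply: sub_in_path pB pA => x y xB yB /and3P[_ _ xy].
by rewrite /adj_in xB yB.
Qed.

Fixpoint walk (x : V) (s : seq (F * V)) : bool :=
  if s is (f, y) :: s' then
    [&& is_vertex T x f, is_vertex T y f, x != y & walk y s']
  else true.

Definition walk_end (x : V) (s : seq (F * V)) : V := last x (map snd s).

Lemma walk_cat x s1 s2 : walk x (s1 ++ s2) = walk x s1 && walk (walk_end x s1) s2.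
Proof. by elim: s1 x => [|[f y] s1 IH] x //=; rewrite IH !andbA. Qed.

Lemma walk_end_cat x s1 s2 : walk_end x (s1 ++ s2) = walk_end (walk_end x s1) s2.
Proof. by rewrite /walk_end map_cat last_cat. Qed.

Fixpoint rev_walk (x : V) (s : seq (F * V)) : seq (F * V) :=
  if s is (f, y) :: s' then rcons (rev_walk y s') (f, x) else [::].

Lemma rev_walkP x s : walk x s ->
  [/\ walk (walk_end x s) (rev_walk x s), walk_end (walk_end x s) (rev_walk x s) = x
    & map fst (rev_walk x s) = rev (map fst s)].
Proof.
elim: s x => [|[f y] s IH] x //= /and4P[xf yf xy /IH[w e m]].
rewrite -cats1 walk_cat walk_end_cat w e /= xf yf eq_sym xy.
by split=> //; rewrite map_cat m rev_cons cats1.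
Qed.

Definition covering_walk x s (B : {set F}) (Y : {set V}) : Prop :=
  [/\ walk x s, uniq (map fst s), map fst s =i B & walk_end x s \in Y].

Definition walkable (B : {set F}) (X Y : {set V}) : Prop :=
  {in X, forall x, exists s, covering_walk x s B Y}.

Lemma walkable0 X : walkable set0 X X.
Proof. by move=> x xX; exists [::]; split=> // f; rewrite inE. Qed.

Lemma walkableW B X X' Y Y' :
  {subset X' <= X} -> {subset Y <= Y'} -> walkable B X Y -> walkable B X' Y'.
Proof.
move=> sX sY W x /sX/W[s [w u m e]]; exists s; split=> //; exact: sY.
Qed.

Lemma walkable_cat B1 B2 X Y Z : [disjoint B1 & B2] ->
  walkable B1 X Y -> walkable B2 Y Z -> walkable (B1 :|: B2) X Z.
Proof.
move=> dB W1 W2 x /W1[s1 [w1 u1 m1 /W2[s2 [w2 u2 m2 e2]]]].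
exists (s1 ++ s2); split.
- by rewrite walk_cat w1.
- rewrite map_cat cat_uniq u1 u2 andbT; apply/hasPn => f.
  by rewrite m2 m1 => /(disjointFl dB) ->.
- by move=> f; rewrite map_cat mem_cat in_setU m1 m2.
- by rewrite walk_end_cat.
Qed.

Lemma walkable1 g X y : is_vertex T y g ->
  {in X, forall x, is_vertex T x g && (x != y)} -> walkable [set g] X [set y].
Proof.
move=> yg gX x /gX/andP[xg xy]; exists [:: (g, y)].
by split; rewrite /= ?xg ?yg ?xy ?inE // => f; rewrite !inE.
Qed.

Lemma walkable_rev B x y : walkable B [set x] [set x; y] ->
  exists2 z, z \in [set x; y] & walkable B [set z] [set x].
Proof.
move=> /(_ x (set11 x))[s [w u m]]; case/set2P=> e.
  by exists x; rewrite ?set21 // => _ /set1P->; exists s; split; rewrite ?e ?inE.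
exists y; rewrite ?set22 // => _ /set1P->; exists (rev_walk x s).
have [w' e' m'] := rev_walkP w; rewrite -e.
by split; rewrite ?m' ?rev_uniq ?e' ?inE // => f; rewrite mem_rev.
Qed.

Lemma walkable_triangle g B p w q :
  [/\ is_vertex T p g, is_vertex T w g & is_vertex T q g] ->
  [/\ p != w, p != q & w != q] -> g \notin B ->
  walkable B [set w; q] [set w; q] -> walkable (g |: B) [set p; w] [set p; q].
Proof.
move=> [pg wg qg] [pw pq wq] gB W; have dgB : [disjoint [set g] & B] by rewrite disjoints1.
move=> _ /set2P[->|->].
- have /walkable_rev[z zqw Wz] : walkable B [set q] [set q; w].
    by rewrite setUC; apply: walkableW W => // v /set1P->; rewrite set22.
  have Wg : walkable [set g] [set p] [set z].
    by apply: walkable1 => [|_ /set1P->]; case/set2P: zqw => ->; rewrite ?pg.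
  have : walkable (g |: B) [set p] [set p; q].
    by apply: walkableW (walkable_cat dgB Wg Wz) => // v /set1P->; rewrite set22.
  by move/(_ p (set11 p)).
- have Wg : walkable [set g] [set w; q] [set p].
    by apply: walkable1 pg _ => v /set2P[]->; rewrite eq_sym ?wg ?qg ?pw ?pq.
  have := walkable_cat _ W Wg; rewrite disjoint_sym setUC => /(_ dgB).
  have sX : {subset [set w] <= [set w; q]} by move=> v /set1P->; rewrite set21.
  have sY : {subset [set p] <= [set p; q]} by move=> v /set1P->; rewrite set21.
  by move=> /(walkableW sX sY) /(_ w (set11 w)).
Qed.

Section Branches.
Variables (S : {set F}) (g : F).
Local Notation adj' := (adj_in (S :\ g)).

Definition across (j : 'I_3) (b : F) : bool :=
  (b \in S :\ g) && (if glue g j is Some (h, _) then connect adj' h b else false).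

(* A component of S :\ g reached through several sides of g is assigned to
   the least of them, so that the branches are disjoint. *)
Definition branch (j : 'I_3) : {set F} :=
  [set b | across j b && [forall j', across j' b ==> (j <= j')]].

Lemma across_adj j a b : adj' a b -> across j a = across j b.
Proof.
suff acrossW x y : adj' x y -> across j x -> across j y.
  by move=> ab; apply/idP/idP; apply: acrossW; rewrite // adj_in_sym.
move=> xy /andP[_]; rewrite /across; case: (glue g j) => [[h _]|] // hx.
by case/and3P: (xy) => _ -> _; rewrite (connect_trans hx (connect1 xy)).
Qed.

Lemma branch_closed j : closed adj' (branch j).
Proof.
move=> a b ab; rewrite !inE (across_adj _ ab); congr (_ && _).
by apply: eq_forallb => j'; rewrite (across_adj _ ab).
Qed.

Lemma branch_subset j : branch j \subset S :\ g.
Proof. by apply/subsetP => b; rewrite inE => /andP[/andP[]]. Qed.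

Lemma branch_disjoint j j' : j != j' -> [disjoint branch j & branch j'].
Proof.
move=> jj'; apply/pred0P => b /=; apply/negP; rewrite !inE.
case/andP=> /andP[aj /forallP/(_ j')/implyP jle] /andP[aj' /forallP/(_ j)/implyP j'le].
by move: jj'; rewrite -val_eqE eqn_leq jle ?j'le.
Qed.

Lemma across_connect j a b : across j a -> across j b -> connect adj' a b.
Proof.
rewrite /across; case: (glue g j) => [[h _]|]; rewrite ?andbF // => /andP[_ ha] /andP[_ hb].
by rewrite (connect_trans _ hb) // adj_in_connect_sym.
Qed.

Lemma branch_connected j : connected_in (branch j).
Proof.
move=> a b aB bB; apply: connect_adj_in_closed (branch_closed j) (aB) _.
move: aB bB; rewrite !inE => /andP[aj _] /andP[bj _].
exact: across_connect aj bj.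
Qed.

Lemma branch_glue j b : b \in branch j ->
  exists h j', glue g j = Some (h, j') /\ h \in branch j.
Proof.
move=> bB; have := bB; rewrite inE => /andP[/andP[_]].
case E: (glue g j) => [[h j']|] // hb _; exists h, j'; split=> //.
by rewrite (closed_connect (branch_closed j) hb).
Qed.

Hypotheses (connS : connected_in S) (gS : g \in S).

Lemma across_exists b : b \in S :\ g -> exists j, across j b.
Proof.
case/setD1P=> bg bS.
pose P := [pred x | (x == g) || [exists j, across j x]].
suff clP : closed (adj_in S) P.
  have := closed_connect clP (connS gS bS); rewrite !inE eqxx (negbTE bg) /=.
  by move/esym/existsP.
apply: (intro_closed (adj_in_connect_sym S)) => x y xy; rewrite !inE.
case: (eqVneq y g) => //= yg; have /and3P[xS yS /facet_adjP[j [j' E]]] := xy.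
case: (eqVneq x g) => [xg|xg] /=.
  by move: E; rewrite xg => E _; apply/existsP; exists j; rewrite /across !inE yg yS E /=.
case/existsP=> k xk; apply/existsP; exists k; rewrite -(@across_adj _ x) //.
by rewrite /adj_in !inE xg yg xS yS /=; apply/facet_adjP; exists j, j'.
Qed.

Lemma branch_exists b : b \in S :\ g -> exists j, b \in branch j.
Proof.
case/across_exists=> j0 bj0; case: (@arg_minnP _ j0 (across^~ b) val bj0) => j bj jmin.
by exists j; rewrite inE bj; apply/forallP => j'; apply/implyP/jmin.
Qed.

End Branches.

Lemma ord3_cases (a b c m : 'I_3) :
  b != a -> c != a -> c != b -> [|| m == a, m == b | m == c].
Proof.
by case: a => [[|[|[|a]]] ha] //; case: b => [[|[|[|b]]] hb] //;
   case: c => [[|[|[|c]]] hc] //; case: m => [[|[|[|m]]] hm].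
Qed.

Lemma ord3_third (i k : 'I_3) : k != i -> exists l : 'I_3, (l != i) && (l != k).
Proof.
move=> ki; exists (inord (3 - i - k)); move: ki.
by case: i => [[|[|[|i]]] hi]; case: k => [[|[|[|k]]] hk] //= _;
   rewrite -!val_eqE /= inordK.
Qed.

Lemma side_vx2 g (i k l : 'I_3) : k != i -> l != i -> l != k ->
  side g i = [set vx g k; vx g l].
Proof.
move=> ki li lk; apply/setP => x; rewrite !inE; apply/imsetP/orP.
- case=> m; rewrite inE => mi ->.
  have := ord3_cases m ki li lk; rewrite (negbTE mi) /=.
  by case/orP=> /eqP->; [left|right].
- by case=> /eqP->; [exists k | exists l]; rewrite ?inE.
Qed.

Lemma is_vertex_vx g m : is_vertex T (vx g m) g.
Proof. by apply/existsP; exists m. Qed.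

Lemma branch_notin S g j : g \notin branch S g j.
Proof. by apply/negP => /(subsetP (branch_subset S g j)); rewrite setD11. Qed.

Lemma branch_partition S g (i k l : 'I_3) :
  connected_in S -> g \in S -> k != i -> l != i -> l != k ->
  S = branch S g l :|: (g |: branch S g k) :|: branch S g i.
Proof.
move=> connS gS ki li lk; apply/setP => f; rewrite !in_setU in_set1.
have sub j : f \in branch S g j -> f \in S by move/(subsetP (branch_subset S g j))/setD1P=> [].
apply/idP/idP => [fS|].
  case: (eqVneq f g) => [_|fg]; first by rewrite /= orbT.
  have [j fj] : exists j, f \in branch S g j by apply: branch_exists; rewrite ?in_setD1 ?fg.
  have := ord3_cases j ki li lk.
  by case/or3P=> /eqP Ej; rewrite -Ej fj ?orbT.
by case/orP=> [/orP[/sub|/orP[/eqP->|/sub]]|/sub].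
Qed.

Lemma walkable_corner S g (i k : 'I_3) :
  connected_in S -> g \in S -> k != i ->
  (forall j, walkable (branch S g j) (side g j) (side g j)) ->
  walkable S [set vx g k] (side g i).
Proof.
move=> connS gS ki Wb; have [l /andP[li lk]] := ord3_third ki.
have [ik kl il] : [/\ i != k, k != l & i != l] by split; rewrite eq_sym.
have Wl : walkable (branch S g l) [set vx g k] [set vx g k; vx g i].
  by apply: walkableW (Wb l) => [_ /set1P->|]; rewrite (side_vx2 g kl il ik) ?set21.
have Wk : walkable (g |: branch S g k) [set vx g k; vx g i] [set vx g k; vx g l].
  apply: walkable_triangle; rewrite -?(side_vx2 g ik lk li) ?branch_notin //.
    by split; apply: is_vertex_vx.
  by split; rewrite (inj_eq (@vx_inj _ _ T g)) // eq_sym.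
have Wi : walkable (branch S g i) [set vx g k; vx g l] (side g i).
  by rewrite -(side_vx2 g ki li lk).
rewrite (branch_partition connS gS ki li lk); apply: walkable_cat (walkable_cat _ Wl Wk) Wi.
  by rewrite disjoints_subset !subUset -!disjoints_subset disjoints1
             branch_notin !branch_disjoint.
by rewrite disjoint_sym disjoints_subset subUset -!disjoints_subset disjoints1
           branch_notin branch_disjoint.
Qed.

Lemma connected_walkable S g i :
  connected_in S -> g \in S -> walkable S (side g i) (side g i).
Proof.
have [n] := ubnP #|S|; elim: n S g i => // n IH S g i ltSn connS gS.
move=> x /imsetP[k]; rewrite inE => ki ->.
apply: walkable_corner (set11 _) => // j.
case: (set_0Vmem (branch S g j)) => [->|[b /branch_glue[h [j' [E hB]]]]].
  exact: walkable0.
rewrite (glue_vx E); apply: IH hB => //; last exact: branch_connected.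
rewrite -ltnS (leq_trans _ ltSn) // (cardsD1 g S) gS ltnS.
exact/subset_leq_card/branch_subset.
Qed.

Lemma connect_shared_vertex v f h :
  is_vertex T v f -> is_vertex T v h -> connect facet_adj f h.
Proof.
move=> /existsP[i /eqP fi] /existsP[j /eqP hj].
have /connectP[p pp lp] := @link_connected _ _ T (f, i) (h, j) (etrans fi (esym hj)).
apply/connectP; exists (map fst p); last by rewrite (last_map fst p (f, i)) -lp.
apply: homo_path pp => c d /existsP[i' /andP[_ /existsP[j' /and3P[/eqP E _ _]]]].
by apply/facet_adjP; exists i', j'.
Qed.

Definition reaches (f : F) (x : V + F) : bool :=
  match x with
  | inl v => [exists h, is_vertex T v h && connect facet_adj f h]
  | inr h => connect facet_adj f h
  end.

Lemma inc_rel_sym : symmetric (inc_rel T).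
Proof. by case=> [v|f] [w|h]. Qed.

Lemma connect_inc_rel_facet_adj f h :
  connect (inc_rel T) (inr f) (inr h) -> connect facet_adj f h.
Proof.
have clR : closed (inc_rel T) (reaches f).
  apply: (intro_closed (sym_connect_sym inc_rel_sym)) => -[v|h1] [w|h2] //=.
    move=> vh2 /existsP[h1 /andP[vh1 fh1]].
    exact: connect_trans fh1 (connect_shared_vertex vh1 vh2).
  by move=> vh1 fh1; apply/existsP; exists h1; rewrite vh1.
by move/(closed_connect clR); rewrite !unfold_in /= connect0 => <-.
Qed.

Lemma walk_trail_adj x s : walk x s -> trail_adj T x s.
Proof. by elim: s x => [|[f y] s IH] x //= /and4P[-> -> _ /IH]. Qed.

Lemma mem_trail_arcs x s a : a \in trail_arcs x s -> a.2 \in map fst s.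
Proof.
elim: s x => [|[f y] s IH] x //=.
by rewrite !inE => /or3P[/eqP->|/eqP->|/IH->]; rewrite ?eqxx ?orbT.
Qed.

Lemma walk_uniq_trail_arcs x s :
  walk x s -> uniq (map fst s) -> uniq (trail_arcs x s).
Proof.
elim: s x => [|[f y] s IH] x //= /and4P[_ _ xy w] /andP[fs u].
have notin z : (z, f) \notin trail_arcs y s.
  by apply: contra fs => /mem_trail_arcs.
by rewrite IH // inE xpair_eqE eqxx andbT negb_or xy !notin.
Qed.

End FacetPath.

Theorem theorem4 (F V : finType) (T : tri2manifold F V) :
  tri_connected T -> exists (v0 : V) (s : seq (F * V)), facet_path T v0 s.
Proof.
case=> /card_gt0P[g _] connT.
have connF : connected_in T setT.
  move=> a b _ _; have := connect_inc_rel_facet_adj (connT (inr a) (inr b)).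
  by rewrite (@eq_connect _ _ (facet_adj T)) // => x y; rewrite /adj_in !in_setT.
pose x := vx T g ord_max.
have xside : x \in side_vx (vx T g) ord0 by apply/imsetP; exists ord_max.
have [s [w u m _]] := connected_walkable connF (in_setT g) xside.
exists x, s; split=> [||//|f].
- exact: walk_trail_adj w.
- exact: walk_uniq_trail_arcs w u.
- by rewrite m in_setT.
Qed.
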